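(* Let $n,m\geq 1$. Define a map $\Phi$ from $\mathscr H_m(n)$ to the set of $(2m+1)$-historic trees on $n$ vertices recursively: $\Phi(T_1)$ is the one-vertex historic tree (vertex labelled $1$); if $\Phi(T_1,\dots,T_k)=H_k$ has been constructed and $T_{k+1}$ arises from $T_k$ by inserting a key into the $i$-th leaf of $T_k$ (counted from left to right, before any splits are performed), then $\Phi(T_1,\dots,T_{k+1})=H_{k+1}$ is obtained from $H_k$ by placing a new vertex labelled $k+1$ at the $i$-th external vertex of $H_k$ (counted from left to right). Then $\Phi$ is well defined (in particular, for every $k$ the number of external vertices of $H_k$ equals the number of leaves of $T_k$), and $\Phi$ is a bijection between $\mathscr H_m(n)$ and the set of all $(2m+1)$-historic trees on $n$ vertices.
   Context: Fix an integer $m\geq 1$. A $B$-tree of order $2m+1$ is a rooted plane tree whose nodes contain pairwise distinct real keys such that: keys are stored in increasing order from left to right; a non-leaf node with $k$ keys has exactly $k+1$ children, the $i$-th child being attached between the $(i-1)$-th and $i$-th key of the node (the first child to the left of the first key, the last to the right of the last key), with all keys in the subtree of that child lying between those two keys; every node contains between $m$ and $2m$ keys, except the root, which contains between $1$ and $2m$ keys; and all leaves have the same distance to the root. Insertion algorithm: a new key is placed in the appropriate leaf at the appropriate position; if that leaf now has $2m+1$ keys, it is split: its median key moves up into the parent node (at the appropriate position), and the $m$ smallest and the $m$ largest keys form two new nodes, which become the children of the parent on either side of the moved key; this is repeated at the parent if it now contains $2m+1$ keys; if the root gets $2m+1$ keys, a new root containing only its median key is created above it, with the two halves as its children. $B$-trees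 are considered up to isomorphism of rooted plane trees (only the shape and the number of keys in each node matter); leaves are numbered from left to right. A history of a $B$-tree $T_n$ with $n$ keys is a sequence $(T_1,\dots,T_n)$ of $B$-trees of order $2m+1$ such that $T_1$ is the single node containing one key and $T_i$ is obtained from $T_{i-1}$ by inserting one key with the insertion algorithm ($i=2,\dots,n$). $\mathscr H_m(n)$ denotes the set of all histories of all $B$-trees of order $2m+1$ with $n$ keys. A $(2m+1)$-historic tree on $n$ vertices is a rooted plane tree whose $n$ vertices are labelled bijectively by $\{1,\dots,n\}$ so that labels increase along every path from the root to a leaf, and such that (with the root at height $0$) the vertices at heights $2m,3m+1,4m+2,\dots$ (i.e. heights $2m+j(m+1)$, $j\geq 0$), called branchings, have two ordered child slots (left and right), each of which may or may not be occupied by a child, while every other vertex has a single child slot (so at most one child). The vertices of the tree are called internal; the unoccupied child slots are called external vertices, ordered from left to right by the planar structure. *)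

From mathcomp Require Import all_boot.
Set Implicit Arguments. Unset Strict Implicit. Unset Printing Implicit Defensive.

(* B-trees of order 2m+1, up to isomorphism of rooted plane trees:    *)
(* a node records only its number of keys and its ordered children.   *)
Inductive btree : Type := BNode of nat & seq btree.

Definition bkeys (t : btree) := let: BNode k _ := t in k.
Definition bchildren (t : btree) := let: BNode _ cs := t in cs.

Fixpoint nleaves (t : btree) : nat :=
  let: BNode _ cs := t in
  if cs is [::] then 1 else sumn (map nleaves cs).

(* validity: [bt_ok m t isroot d] : t is a B-tree of order 2m+1 all of
   whose leaves are at depth d (the root being at depth 0). *)
Fixpoint bt_ok (m : nat) (t : btree) (isroot : bool) (d : nat) : bool :=
  let: BNode k cs := t in
  [&& (if isroot then 1 <= k else m <= k), k <= 2 * m &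
      if cs is [::] then d == 0
      else [&& 0 < d, size cs == k.+1 & all (fun c => bt_ok m c false d.-1) cs]].

Definition is_btree (m : nat) (t : btree) : Prop := exists d, bt_ok m t true d.

(* The result [inr (l, r)] means: the median key moves up to the parent and
   l (m smallest keys) and r (m largest keys) replace the node. *)
Definition fixnode (m k' : nat) (cs' : seq btree) : btree + (btree * btree) :=
  if k' == (2 * m).+1 then inr (BNode m (take m.+1 cs'), BNode m (drop m.+1 cs'))
  else inl (BNode k' cs').

(* Insertion of a key into the i-th leaf (0-based, left to right) of t. *)
Fixpoint ins (m : nat) (t : btree) (i : nat) {struct t} : btree + (btree * btree) :=
  let: BNode k cs := t in
  if cs is [::] then fixnode m k.+1 [::]
  else
    let fix go (cs : seq btree) (i : nat) : seq btree * bool :=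
      match cs with
      | [::] => ([::], false)
      | c :: cs0 =>
          if i < nleaves c then
            match ins m c i with
            | inl c' => (c' :: cs0, false)
            | inr (l, r) => (l :: r :: cs0, true)
            end
          else let: (cs1, b) := go cs0 (i - nleaves c) in (c :: cs1, b)
      end in
    let: (cs', b) := go cs i in fixnode m (k + b) cs'.

Definition binsert (m : nat) (t : btree) (i : nat) : btree :=
  match ins m t i with
  | inl t' => t'
  | inr (l, r) => BNode 1 [:: l; r]
  end.

Definition T1 : btree := BNode 1 [::].

Definition is_history (m n : nat) (hist : seq btree) : Prop :=
  [/\ size hist = n, nth T1 hist 0 = T1,
      (forall k, k < n -> is_btree m (nth T1 hist k)) &
      (forall k, k.+1 < n -> exists2 i, i < nleaves (nth T1 hist k) &
                     nth T1 hist k.+1 = binsert m (nth T1 hist k) i)].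

(* [s] records, for each step k -> k+1 (0-based k), the index of the leaf of
   T_k (before splitting) into which the key is inserted. *)
Definition leaf_choice (m : nat) (hist : seq btree) (s : seq nat) : Prop :=
  size s = (size hist).-1 /\
  forall k, k < size s ->
    nth 0 s k < nleaves (nth T1 hist k) /\
    nth T1 hist k.+1 = binsert m (nth T1 hist k) (nth 0 s k).

(* (2m+1)-historic trees: labelled plane trees, each vertex having an  *)
(* ordered list of child slots (None = unoccupied = external vertex).  *)
Inductive htree : Type := HNode of nat & seq (option htree).

Definition hlabel (t : htree) := let: HNode l _ := t in l.

Definition branching (m h : nat) : bool := (2 * m <= h) && ((h - 2 * m) %% m.+1 == 0).
Definition nslots (m h : nat) : nat := if branching m h then 2 else 1.

Fixpoint hlabels (t : htree) : seq nat :=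
  let: HNode l ss := t in
  l :: flatten (map (fun o => if o is Some c then hlabels c else [::]) ss).

Fixpoint nexternal (t : htree) : nat :=
  let: HNode _ ss := t in
  sumn (map (fun o => if o is Some c then nexternal c else 1) ss).

Fixpoint hwf (m h : nat) (t : htree) : bool :=
  let: HNode l ss := t in
  (size ss == nslots m h) &&
  all (fun o => if o is Some c then (l < hlabel c) && hwf m h.+1 c else true) ss.

Definition is_historic (m n : nat) (t : htree) : Prop :=
  hwf m 0 t /\ perm_eq (hlabels t) (iota 1 n).

(* Place a new vertex labelled lab at the i-th (0-based, left to right)
   external vertex of t, t being at height h. *)
Fixpoint hins (m h : nat) (t : htree) (i lab : nat) {struct t} : htree :=
  let: HNode l ss := t in
  let fix go (ss : seq (option htree)) (i : nat) : seq (option htree) :=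
    match ss with
    | [::] => [::]
    | None :: ss0 =>
        if i == 0 then Some (HNode lab (nseq (nslots m h.+1) None)) :: ss0
        else None :: go ss0 i.-1
    | Some c :: ss0 =>
        if i < nexternal c then Some (hins m h.+1 c i lab) :: ss0
        else Some c :: go ss0 (i - nexternal c)
    end in
  HNode l (go ss i).

Definition H1 (m : nat) : htree := HNode 1 (nseq (nslots m 0) None).

Fixpoint hseq_from (m : nat) (H : htree) (k : nat) (s : seq nat) : seq htree :=
  match s with
  | [::] => [:: H]
  | i :: s' => H :: hseq_from m (hins m 0 H i k.+1) k.+1 s'
  end.

Definition hseq (m : nat) (s : seq nat) : seq htree := hseq_from m (H1 m) 1 s.

Definition PhiRel (m : nat) (hist : seq btree) (H : htree) : Prop :=
  exists2 s, leaf_choice m hist s & H = last (H1 m) (hseq m s).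

From mathcomp Require Import all_boot zify.
Set Implicit Arguments. Unset Strict Implicit. Unset Printing Implicit Defensive.

(* Record, left to right, the key counts of the leaves of a B-tree and the heights of the
   external vertices of a historic tree.  With kappa(e) = e for e <= 2m, and kappa cycling
   through m, m+1, ..., 2m afterwards (value 2m exactly at the branching heights), the
   leaf sizes of T_k are the images under kappa of the external heights of H_k: inserting
   a key into a leaf with j < 2m keys makes it j+1, while a leaf with 2m keys splits into
   two with m keys, just as a new vertex at an external vertex of height e leaves one
   external vertex of height e+1, or two if e is a branching.  Both sides have as many
   leaves as external vertices, and the new leaf-size sequence determines the leaf that
   was chosen, which makes Phi well defined and injective.  Conversely, deleting the
   vertices labelled > k from a historic tree on n vertices yields H_k, and the positions
   of the successive vertices are a valid sequence of leaf choices. *)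

Definition all_subtrees (P : btree -> Prop) (cs : seq btree) : Prop :=
  foldr (fun c acc => P c /\ acc) True cs.

Definition btree_nested_ind (P : btree -> Prop)
    (IH : forall k cs, all_subtrees P cs -> P (BNode k cs)) : forall t, P t :=
  fix f t := let: BNode k cs := t in IH k cs
    ((fix g cs : all_subtrees P cs :=
        if cs is c :: cs0 then conj (f c) (g cs0) else I) cs).

Definition all_slots (P : htree -> Prop) (ss : seq (option htree)) : Prop :=
  foldr (fun o acc => (if o is Some c then P c else True) /\ acc) True ss.

Definition htree_nested_ind (P : htree -> Prop)
    (IH : forall l ss, all_slots P ss -> P (HNode l ss)) : forall t, P t :=
  fix f t := let: HNode l ss := t in IH l ss
    ((fix g ss : all_slots P ss :=
        match ss with
        | [::] => I
        | None :: ss0 => conj I (g ss0)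
        | Some c :: ss0 => conj (f c) (g ss0)
        end) ss).

(* Copies of the local fixpoints of [ins] and [hins], so that [ins_node] and [hins_node]
   hold by conversion. *)
Definition ins_children (insc : btree -> nat -> btree + (btree * btree)) :=
  fix go (cs : seq btree) (i : nat) : seq btree * bool :=
    match cs with
    | [::] => ([::], false)
    | c :: cs0 =>
        if i < nleaves c then
          match insc c i with
          | inl c' => (c' :: cs0, false)
          | inr (l, r) => (l :: r :: cs0, true)
          end
        else let: (cs1, b) := go cs0 (i - nleaves c) in (c :: cs1, b)
    end.

Lemma ins_leaf m k i : ins m (BNode k [::]) i = fixnode m k.+1 [::].
Proof. by []. Qed.

Lemma ins_node m k c cs i : ins m (BNode k (c :: cs)) i =
  let: (cs', b) := ins_children (ins m) (c :: cs) i in fixnode m (k + b) cs'.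
Proof. by []. Qed.

Definition hins_slots (m h lab : nat) (insc : htree -> nat -> htree) :=
  fix go (ss : seq (option htree)) (i : nat) : seq (option htree) :=
    match ss with
    | [::] => [::]
    | None :: ss0 =>
        if i == 0 then Some (HNode lab (nseq (nslots m h.+1) None)) :: ss0
        else None :: go ss0 i.-1
    | Some c :: ss0 =>
        if i < nexternal c then Some (insc c i) :: ss0
        else Some c :: go ss0 (i - nexternal c)
    end.

Lemma hins_node m h l ss i lab : hins m h (HNode l ss) i lab =
  HNode l (hins_slots m h lab (fun c i => hins m h.+1 c i lab) ss i).
Proof. by []. Qed.

Definition splice (a : seq nat) i (x : seq nat) := take i a ++ x ++ drop i.+1 a.

Lemma splice_catl a b i x : i < size a -> splice (a ++ b) i x = splice a i x ++ b.
Proof.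
move=> lt_i_a; rewrite /splice take_cat lt_i_a drop_cat.
case: (ltnP i.+1 (size a)) => h; first by rewrite !catA.
have Ea : size a = i.+1 by apply/eqP; rewrite eqn_leq h lt_i_a.
by rewrite Ea subnn drop0 -Ea drop_size cats0 !catA.
Qed.

Lemma splice_catr a b i x :
  size a <= i -> splice (a ++ b) i x = a ++ splice b (i - size a) x.
Proof.
move=> le_a_i; rewrite /splice take_cat ltnNge le_a_i drop_cat ltnNge (leqW le_a_i).
by rewrite subSn // -catA.
Qed.

Lemma nth_splice_at a i x :
  i < size a -> 0 < size x -> nth 0 (splice a i x) i = nth 0 x 0.
Proof.
move=> lt_i_a x_gt0.
by rewrite /splice nth_cat size_takel ?(ltnW lt_i_a) // ltnn subnn nth_cat x_gt0.
Qed.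

Lemma nth_splice_before a i j x : j < i -> i < size a -> nth 0 (splice a i x) j = nth 0 a j.
Proof.
by move=> lt_j_i lt_i_a; rewrite /splice nth_cat size_takel ?(ltnW lt_i_a) // lt_j_i nth_take.
Qed.

Fixpoint leaf_sizes (t : btree) : seq nat :=
  let: BNode k cs := t in if cs is [::] then [:: k] else flatten (map leaf_sizes cs).

Lemma leaf_sizes_node k cs :
  0 < size cs -> leaf_sizes (BNode k cs) = flatten (map leaf_sizes cs).
Proof. by case: cs. Qed.

Lemma size_leaf_sizes t : size (leaf_sizes t) = nleaves t.
Proof.
elim/btree_nested_ind: t => k cs IH.
suff: size (flatten (map leaf_sizes cs)) = sumn (map nleaves cs) by case: cs IH.
by elim: cs IH => //= c cs IHcs [Ec /IHcs Ecs]; rewrite size_cat Ec Ecs.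
Qed.

Lemma bt_ok_node m k cs r d : 0 < size cs -> bt_ok m (BNode k cs) r d =
  [&& (if r then 1 <= k else m <= k), k <= 2 * m, 0 < d, size cs == k.+1 &
      all (fun c => bt_ok m c false d.-1) cs].
Proof. by case: cs. Qed.

Section BtreeInsertion.

Variable m : nat.

Definition leaf_grow (a : seq nat) i :=
  splice a i (if nth 0 a i == 2 * m then [:: m; m] else [:: (nth 0 a i).+1]).

Lemma leaf_grow_catl a b i : i < size a -> leaf_grow (a ++ b) i = leaf_grow a i ++ b.
Proof. by move=> lt_i_a; rewrite /leaf_grow nth_cat lt_i_a splice_catl. Qed.

Lemma leaf_grow_catr a b i :
  size a <= i -> leaf_grow (a ++ b) i = a ++ leaf_grow b (i - size a).
Proof. by move=> le_a_i; rewrite /leaf_grow nth_cat ltnNge le_a_i splice_catr. Qed.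

Lemma nth_leaf_grow a i : i < size a ->
  nth 0 (leaf_grow a i) i = if nth 0 a i == 2 * m then m else (nth 0 a i).+1.
Proof. by move=> lt_i; rewrite nth_splice_at //; case: ifP. Qed.

Lemma leaf_grow_inj a i j :
  0 < m -> i < size a -> j < size a -> leaf_grow a i = leaf_grow a j -> i = j.
Proof.
move=> m_gt0; wlog le_ij : i j / i <= j.
  move=> W lt_i lt_j E; case: (leqP i j) => [le|/ltnW le]; first exact: W.
  exact/esym/W.
move=> lt_i lt_j E; case: (ltngtP i j) le_ij => // lt_ij _.
have := nth_leaf_grow lt_i; rewrite E [LHS]nth_splice_before //.
by case: eqP => [->|_]; lia.
Qed.

Definition ins_correct isroot d i a (r : btree + (btree * btree)) : Prop :=
  match r with
  | inl t' => bt_ok m t' isroot d /\ leaf_sizes t' = leaf_grow a i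
  | inr (l, r) =>
      [/\ bt_ok m l false d, bt_ok m r false d & leaf_sizes l ++ leaf_sizes r = leaf_grow a i]
  end.

Definition ins_spec t := forall isroot d i, bt_ok m t isroot d -> i < nleaves t ->
  ins_correct isroot d i (leaf_sizes t) (ins m t i).

Lemma ins_children_spec cs d i :
  all_subtrees ins_spec cs -> all (fun c => bt_ok m c false d) cs ->
  i < sumn (map nleaves cs) ->
  let: (cs', b) := ins_children (ins m) cs i in
  [/\ all (fun c => bt_ok m c false d) cs', size cs' = size cs + b &
      flatten (map leaf_sizes cs') = leaf_grow (flatten (map leaf_sizes cs)) i].
Proof.
elim: cs i => [|c cs IH] i //= [IHc IHcs] /andP [ok_c ok_cs] lt_i.
case: ifP => lt_ic.
  have := IHc false d i ok_c lt_ic.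
  case: (ins m c i) => [c'|[l r]] /=.
    by case=> -> E; rewrite ok_cs E leaf_grow_catl ?size_leaf_sizes // addn0.
  by case=> -> -> E; rewrite ok_cs catA E leaf_grow_catl ?size_leaf_sizes // addn1.
have lt_i' : i - nleaves c < sumn (map nleaves cs) by rewrite ltn_subLR // leqNgt lt_ic.
have := IH _ IHcs ok_cs lt_i'.
case: (ins_children (ins m) cs (i - nleaves c)) => cs1 b [ok1 size1 E1] /=.
by rewrite ok_c ok1 size1 E1 leaf_grow_catr ?size_leaf_sizes // leqNgt lt_ic.
Qed.

Lemma ins_leaf_spec k : ins_spec (BNode k [::]).
Proof.
move=> isroot d i ok lt_i; move: ok => /and3P [k_lb le_k2m /eqP ->].
have -> : i = 0 by case: i lt_i.
rewrite ins_leaf /fixnode eqSS /ins_correct /leaf_grow /splice /=.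
case: eqP => [_|/eqP ne]; first by rewrite /= leqnn leq_pmull.
rewrite /= (ltn_neqAle k) ne le_k2m andbT; split=> //.
by case: isroot k_lb => // /leqW ->.
Qed.

Lemma ins_correct_all t : ins_spec t.
Proof.
elim/btree_nested_ind: t => k [|c cs] IH; first exact: ins_leaf_spec.
move=> isroot d i; rewrite ins_node bt_ok_node //.
move=> /and5P [k_lb le_k2m d_gt0 /eqP size_cs ok_cs] lt_i.
have := ins_children_spec IH ok_cs lt_i.
case: (ins_children (ins m) (c :: cs) i) => cs' b [ok' size' E'].
have cs'_gt0 : 0 < size cs' by rewrite size' size_cs.
rewrite /fixnode /ins_correct; case: eqP => E.
  have size2 : size cs' = (2 * m).+2 by rewrite size' size_cs addSn -E.
  have size_t : size (take m.+1 cs') = m.+1 by rewrite size_takel // size2; lia.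
  have size_d : size (drop m.+1 cs') = m.+1 by rewrite size_drop size2; lia.
  move: ok'; rewrite -{1}(cat_take_drop m.+1 cs') all_cat => /andP [ok_t ok_d].
  rewrite !bt_ok_node ?size_t ?size_d // leqnn leq_pmull // d_gt0 ok_t ok_d eqxx.
  by rewrite !leaf_sizes_node ?size_t ?size_d // -flatten_cat -map_cat cat_take_drop E'.
have le_kb : k + b <= 2 * m by case: b {size' E'} E => /= E; lia.
rewrite bt_ok_node // le_kb d_gt0 ok' size' size_cs addSn eqxx leaf_sizes_node // E'.
by split=> //; rewrite !andbT; case: isroot k_lb => lb; apply: leq_trans (leq_addr _ _).
Qed.

Lemma binsert_correct t d i : 0 < m -> bt_ok m t true d -> i < nleaves t ->
  exists2 d', bt_ok m (binsert m t i) true d'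
            & leaf_sizes (binsert m t i) = leaf_grow (leaf_sizes t) i.
Proof.
move=> m_gt0 ok_t lt_i; have := ins_correct_all ok_t lt_i; rewrite /binsert.
case: (ins m t i) => [t'|[l r]]; first by case=> ok' E; exists d.
case=> ok_l ok_r E; exists d.+1; last by rewrite /= cats0.
by rewrite bt_ok_node //= ok_l ok_r /= andbT; lia.
Qed.

End BtreeInsertion.

Fixpoint ext_heights (h : nat) (t : htree) : seq nat :=
  let: HNode _ ss := t in
  flatten (map (fun o => if o is Some c then ext_heights h.+1 c else [:: h.+1]) ss).

Definition slot_ext_heights h (o : option htree) :=
  if o is Some c then ext_heights h.+1 c else [:: h.+1].

Definition slot_nexternal (o : option htree) := if o is Some c then nexternal c else 1.

Lemma size_ext_heights h t : size (ext_heights h t) = nexternal t.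
Proof.
elim/htree_nested_ind: t h => l ss IH h /=.
elim: ss IH => //= o ss IHss [IHo /IHss Ess]; rewrite size_cat Ess.
by case: o IHo => // c ->.
Qed.

Section KeysOfHeight.

Variable m : nat.

(* Keys in the leaf matching an external vertex at height e: 0, 1, ..., 2m, then
   cycling through m, m+1, ..., 2m, the value 2m being reached exactly at branchings. *)
Fixpoint keys_of_height e :=
  if e is e'.+1 then (if branching m e' then m else (keys_of_height e').+1) else 0.

Lemma modnS_cases x d : 0 < d -> x.+1 %% d = if x %% d == d.-1 then 0 else (x %% d).+1.
Proof.
move=> d_gt0; rewrite {1}(divn_eq x d) -addnS modnMDl.
have := ltn_pmod x d_gt0; case: eqP => [->|ne] lt_r; first by rewrite prednK // modnn.
by rewrite modn_small //; move: (x %% d) lt_r ne => r; lia.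
Qed.

Lemma keys_of_heightE e :
  keys_of_height e = if e <= 2 * m then e else m + (e - (2 * m).+1) %% m.+1.
Proof.
elim: e => [|e IH] //=; rewrite /branching.
case: (ltngtP e (2 * m)) => h.
- by rewrite IH ltnW // h leqNgt h.
- have -> : e - 2 * m = (e - (2 * m).+1).+1 by lia.
  rewrite IH leqNgt h /=.
  have -> : e.+1 - (2 * m).+1 = (e - (2 * m).+1).+1 by lia.
  by rewrite !modnS_cases //=; case: (_ %% _ == m) => /=; lia.
- by rewrite h !subnn mod0n addn0.
Qed.

Hypothesis m_gt0 : 0 < m.

Lemma branchingE e : branching m e = (keys_of_height e == 2 * m).
Proof.
rewrite keys_of_heightE /branching; case: (ltngtP e (2 * m)) => h /=.
- by case: eqP => //; lia.
- have -> : e - 2 * m = (e - (2 * m).+1).+1 by lia.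
  rewrite modnS_cases //=.
  have := ltn_pmod (e - (2 * m).+1) (ltn0Sn m).
  by move: (_ %% _) => r lt_r; case: (r =P m) => [->|ne] /=; case: eqP => //; lia.
- by rewrite h subnn mod0n !eqxx.
Qed.

Lemma keys_of_height_children e : map keys_of_height (nseq (nslots m e) e.+1) =
  if keys_of_height e == 2 * m then [:: m; m] else [:: (keys_of_height e).+1].
Proof. by rewrite /nslots branchingE; case: ifP => E /=; rewrite branchingE E. Qed.

Definition ext_grow (E : seq nat) i := splice E i (nseq (nslots m (nth 0 E i)) (nth 0 E i).+1).

Lemma ext_grow_catl a b i : i < size a -> ext_grow (a ++ b) i = ext_grow a i ++ b.
Proof. by move=> lt_i_a; rewrite /ext_grow nth_cat lt_i_a splice_catl. Qed.

Lemma ext_grow_catr a b i :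
  size a <= i -> ext_grow (a ++ b) i = a ++ ext_grow b (i - size a).
Proof. by move=> le_a_i; rewrite /ext_grow nth_cat ltnNge le_a_i splice_catr. Qed.

Lemma map_keys_of_height_ext_grow E i : i < size E ->
  map keys_of_height (ext_grow E i) = leaf_grow m (map keys_of_height E) i.
Proof.
move=> lt_i_E; rewrite /ext_grow /leaf_grow /splice !map_cat map_take map_drop.
by rewrite keys_of_height_children (nth_map 0).
Qed.

End KeysOfHeight.

Section HistoricInsertion.

Variables (m lab : nat).

Let hins_at h := fun c i => hins m h.+1 c i lab.

Lemma size_hins_slots h f ss i : size (hins_slots m h lab f ss i) = size ss.
Proof.
elim: ss i => [|[c|] ss IH] i //=; first by case: ifP => _ //=; rewrite IH.
by case: eqP => _ //=; rewrite IH.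
Qed.

Lemma hlabel_hins h t i : hlabel (hins m h t i lab) = hlabel t.
Proof. by case: t. Qed.

Definition ext_heights_spec t := forall h i, i < nexternal t ->
  ext_heights h (hins m h t i lab) = ext_grow m (ext_heights h t) i.

Lemma hins_slots_ext_heights h ss i :
  all_slots ext_heights_spec ss -> i < sumn (map slot_nexternal ss) ->
  flatten (map (slot_ext_heights h) (hins_slots m h lab (hins_at h) ss i)) =
  ext_grow m (flatten (map (slot_ext_heights h) ss)) i.
Proof.
elim: ss i => [|[c|] ss IH] i //= [IHo IHss] lt_i.
  case: ifP => lt_ic /=; first by rewrite IHo // ext_grow_catl // size_ext_heights.
  rewrite IH //; last by move: lt_i lt_ic => /= lt_i /negbT; rewrite -leqNgt; lia.
  by rewrite ext_grow_catr ?size_ext_heights // leqNgt lt_ic.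
case: eqP => [->|ne] /=.
  by rewrite /ext_grow /splice /= drop0; elim: (nslots m h.+1) => //= k ->.
rewrite IH //; last by case: i ne lt_i.
by rewrite (@ext_grow_catr m [:: h.+1]) /= ?subn1 //; case: i ne {lt_i}.
Qed.

Lemma hins_ext_heights t : ext_heights_spec t.
Proof.
by elim/htree_nested_ind: t => l ss IH h i; rewrite hins_node; apply: hins_slots_ext_heights.
Qed.

Definition slot_labels (o : option htree) := if o is Some c then hlabels c else [::].

Definition hlabels_spec t :=
  forall h i, i < nexternal t -> perm_eq (hlabels (hins m h t i lab)) (lab :: hlabels t).

Lemma hins_slots_labels h ss i :
  all_slots hlabels_spec ss -> i < sumn (map slot_nexternal ss) ->
  perm_eq (flatten (map slot_labels (hins_slots m h lab (hins_at h) ss i)))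
          (lab :: flatten (map slot_labels ss)).
Proof.
elim: ss i => [|[c|] ss IH] i //= [IHo IHss] lt_i.
  case: ifP => lt_ic /=; first by rewrite -cat_cons perm_cat2r IHo.
  have lt_i' : i - nexternal c < sumn (map slot_nexternal ss).
    by move: lt_i lt_ic => /= lt_i /negbT; rewrite -leqNgt; lia.
  by rewrite (perm_catl _ (IH _ IHss lt_i')) -cat1s perm_catCA.
case: eqP => [_|ne] /=; first by elim: (nslots m h.+1).
by rewrite IH //; case: i ne lt_i.
Qed.

Lemma hins_labels t : hlabels_spec t.
Proof.
elim/htree_nested_ind: t => l ss IH h i lt_i; rewrite hins_node /=.
apply: perm_trans (_ : perm_eq (l :: lab :: _) _).
  by rewrite perm_cons; apply: hins_slots_labels.
by rewrite -(cat1s l) -(cat1s lab) perm_catCA.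
Qed.

Definition slot_wf h l (o : option htree) :=
  if o is Some c then (l < hlabel c) && hwf m h.+1 c else true.

Definition hwf_spec t := forall h i, hwf m h t -> all (fun x => x < lab) (hlabels t) ->
  hwf m h (hins m h t i lab).

Lemma hins_slots_wf h l ss i : all_slots hwf_spec ss -> l < lab ->
  all (slot_wf h l) ss -> all (fun x => x < lab) (flatten (map slot_labels ss)) ->
  all (slot_wf h l) (hins_slots m h lab (hins_at h) ss i).
Proof.
elim: ss i => [|o ss IH] i //= [IHo IHss] lt_l /andP [wf_o wf_ss].
rewrite all_cat => /andP [lab_o lab_ss].
case: o IHo wf_o lab_o => [c|] IHo wf_o lab_o /=.
  case: ifP => _ /=; last by rewrite -/(slot_wf h l (Some c)) wf_o IH.
  by rewrite wf_ss andbT /slot_wf hlabel_hins; case/andP: wf_o => -> /= /IHo; apply.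
case: eqP => _ /=; last exact: IH.
by rewrite wf_ss lt_l size_nseq eqxx andbT /=; elim: (nslots m h.+1).
Qed.

Lemma hins_wf t : hwf_spec t.
Proof.
elim/htree_nested_ind: t => l ss IH h i; rewrite hins_node.
move=> /andP [size_ss wf_ss] /andP [lt_l lab_ss]; apply/andP; split.
  by rewrite size_hins_slots.
exact: hins_slots_wf.
Qed.

End HistoricInsertion.

Definition hprune_slot (prune : htree -> htree) K (o : option htree) :=
  if o is Some c then (if hlabel c <= K then Some (prune c) else None) else None.

Fixpoint hprune (K : nat) (t : htree) : htree :=
  let: HNode l ss := t in HNode l (map (hprune_slot (hprune K) K) ss).

Lemma hlabel_in t : hlabel t \in hlabels t.
Proof. by case: t => l ss; rewrite inE eqxx. Qed.

Lemma hwf_hlabel_min m h t : hwf m h t -> all (fun x => hlabel t <= x) (hlabels t).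
Proof.
elim/htree_nested_ind: t h => l ss IH h /= /andP [_ wf_ss]; rewrite leqnn /=.
elim: ss IH wf_ss => //= o ss IHss [IHo IHs] /andP [wf_o wf_ss].
rewrite all_cat IHss // andbT.
case: o IHo wf_o => //= c IHc /andP [lt_lc /IHc/allP min_c].
by apply/allP => x /min_c; apply: leq_trans (ltnW lt_lc).
Qed.

Lemma hprune_id K t : all (fun x => x <= K) (hlabels t) -> hprune K t = t.
Proof.
elim/htree_nested_ind: t => l ss IH /= /andP [_ le_ss]; congr HNode.
elim: ss IH le_ss => //= o ss IHss [IHo /IHss{}IHss]; rewrite all_cat => /andP [le_o /IHss ->].
case: o IHo le_o => //= c IHc le_c.
by rewrite IHc // (allP le_c _ (hlabel_in c)).
Qed.

Lemma hprune_hins m K lab t h i : K < lab -> hprune K (hins m h t i lab) = hprune K t.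
Proof.
move=> lt_K; elim/htree_nested_ind: t h i => l ss IH h i; rewrite hins_node /=; congr HNode.
elim: ss i IH => //= [[c|] ss IHss] i [IHo IHs] /=.
  by case: ifP => _ /=; rewrite ?IHss // hlabel_hins IHo.
by case: eqP => _ /=; rewrite ?IHss // leqNgt lt_K.
Qed.

Lemma hprune_root m h t :
  hwf m h t -> hprune (hlabel t) t = HNode (hlabel t) (nseq (nslots m h) None).
Proof.
case: t => l ss /= /andP [/eqP <- wf_ss]; congr HNode.
elim: ss wf_ss => //= o ss IH /andP [wf_o /IH ->].
by case: o wf_o => //= c /andP [lt_lc _]; rewrite leqNgt lt_lc.
Qed.

Lemma leqS_neq x L : x != L.+1 -> (x <= L.+1) = (x <= L).
Proof. by move=> ne; rewrite leq_eqVlt ltnS (negbTE ne). Qed.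

Lemma hprune_notin L t : L.+1 \notin hlabels t -> hprune L.+1 t = hprune L t.
Proof.
elim/htree_nested_ind: t => l ss IH /=; rewrite inE negb_or => /andP [_ nin]; congr HNode.
elim: ss IH nin => //= o ss IHss [IHo /IHss{}IHss].
rewrite mem_cat negb_or => /andP [nin_o /IHss ->].
case: o IHo nin_o => //= c IHc nin_c.
have ne : hlabel c != L.+1 by apply: contraNneq nin_c => <-; apply: hlabel_in.
by rewrite leqS_neq // IHc.
Qed.

Lemma map_hprune_slot_notin L ss : L.+1 \notin flatten (map slot_labels ss) ->
  map (hprune_slot (hprune L.+1) L.+1) ss = map (hprune_slot (hprune L) L) ss.
Proof.
elim: ss => //= o ss IH; rewrite mem_cat negb_or => /andP [nin_o /IH ->]; congr cons.
case: o nin_o => //= c nin_c.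
have ne : hlabel c != L.+1 by apply: contraNneq nin_c => <-; apply: hlabel_in.
by rewrite leqS_neq // hprune_notin.
Qed.

Section PruneStep.

Variables (m L : nat).

Definition hprune_step_spec c := forall h, hwf m h c -> uniq (hlabels c) ->
  L.+1 \in hlabels c -> hlabel c <= L ->
  exists2 i, i < nexternal (hprune L c) & hprune L.+1 c = hins m h (hprune L c) i L.+1.

Lemma hprune_slots_step h l ss : all_slots hprune_step_spec ss -> all (slot_wf m h l) ss ->
  uniq (flatten (map slot_labels ss)) -> L.+1 \in flatten (map slot_labels ss) ->
  exists2 i, i < sumn (map slot_nexternal (map (hprune_slot (hprune L) L) ss)) &
    map (hprune_slot (hprune L.+1) L.+1) ss =
    hins_slots m h L.+1 (fun c i => hins m h.+1 c i L.+1) (map (hprune_slot (hprune L) L) ss) i.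
Proof.
elim: ss => //= o ss IHss [IHo IHs] /andP [wf_o wf_ss]; rewrite cat_uniq mem_cat.
move=> /and3P [uniq_o disj uniq_ss] /orP [in_o|in_ss]; last first.
  have nin_o : L.+1 \notin slot_labels o by apply: contra disj => ?; apply/hasP; exists L.+1.
  have /= [->] : map (hprune_slot (hprune L.+1) L.+1) [:: o] =
                 map (hprune_slot (hprune L) L) [:: o].
    by apply: map_hprune_slot_notin; rewrite /= cats0.
  have [i lt_i ->] := IHss IHs wf_ss uniq_ss in_ss.
  exists (slot_nexternal (hprune_slot (hprune L) L o) + i); first by rewrite ltn_add2l.
  by case: (hprune_slot _ _ o) => [c'|] //=; rewrite ltnNge leq_addr /= addKn.
have nin_ss : L.+1 \notin flatten (map slot_labels ss).
  by apply: contra disj => ?; apply/hasP; exists L.+1.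
rewrite map_hprune_slot_notin //.
case: o IHo wf_o uniq_o disj in_o => //= c IHc /andP [_ wf_c] uniq_c _ in_c.
(* Either c is the vertex labelled L+1, which occupies an empty slot of the pruned tree,
   or that vertex lies strictly below c. *)
case: (eqVneq (hlabel c) L.+1) => [lab_c|ne].
  exists 0; first by rewrite lab_c ltnn.
  by rewrite lab_c leqnn ltnn /= -lab_c (hprune_root wf_c).
have le_cL : hlabel c <= L by rewrite -leqS_neq //; apply: (allP (hwf_hlabel_min wf_c)).
have [i lt_i E] := IHc h.+1 wf_c uniq_c in_c le_cL.
exists i; first by rewrite le_cL /= (leq_trans lt_i) ?leq_addr.
by rewrite le_cL (leq_trans le_cL) //= lt_i E.
Qed.

Lemma hprune_step t : hprune_step_spec t.
Proof.
elim/htree_nested_ind: t => l ss IH h /andP [_ wf_ss] /andP [_ uniq_ss].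
rewrite inE => /orP [/eqP <-|in_ss]; first by rewrite ltnn.
by move=> _; have [i lt_i E] := hprune_slots_step IH wf_ss uniq_ss in_ss; exists i; rewrite //= E.
Qed.

End PruneStep.

Definition represents m (T : btree) (H : htree) :=
  leaf_sizes T = map (keys_of_height m) (ext_heights 0 H).

Lemma nleaves_represents m T H : represents m T H -> nleaves T = nexternal H.
Proof. by rewrite -size_leaf_sizes -(size_ext_heights 0) => ->; rewrite size_map. Qed.

Lemma represents_T1 m : 0 < m -> represents m T1 (H1 m).
Proof.
move=> m_gt0; have le2m : (2 * m <= 0) = false by rewrite leqNgt muln_gt0 m_gt0.
by rewrite /represents /H1 /nslots /branching le2m /= /branching le2m.
Qed.

Lemma represents_binsert m T H d i lab : 0 < m -> bt_ok m T true d -> i < nleaves T ->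
  represents m T H ->
  exists2 d', bt_ok m (binsert m T i) true d' & represents m (binsert m T i) (hins m 0 H i lab).
Proof.
move=> m_gt0 ok_T lt_i rep; have [d' ok' E] := binsert_correct m_gt0 ok_T lt_i.
exists d' => //; have lt_iE : i < nexternal H by rewrite -(nleaves_represents rep).
by rewrite /represents E hins_ext_heights // rep map_keys_of_height_ext_grow ?size_ext_heights.
Qed.

Fixpoint btree_seq m (T : btree) (s : seq nat) : seq btree :=
  if s is i :: s' then T :: btree_seq m (binsert m T i) s' else [:: T].

Lemma size_btree_seq m T s : size (btree_seq m T s) = (size s).+1.
Proof. by elim: s T => //= i s IH T; rewrite IH. Qed.

Lemma nth_btree_seqS m T s j : j < size s ->
  nth T1 (btree_seq m T s) j.+1 = binsert m (nth T1 (btree_seq m T s) j) (nth 0 s j).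
Proof. by elim: s T j => //= i s IH T [|j] lt_j /=; [case: s {IH lt_j} | rewrite IH]. Qed.

Lemma nth_btree_seq0 m s : nth T1 (btree_seq m T1 s) 0 = T1.
Proof. by case: s. Qed.

Lemma size_hseq m s : size (hseq m s) = (size s).+1.
Proof. by rewrite /hseq; elim: s (H1 m) 1 => //= i s IH H k; rewrite IH. Qed.

Lemma nth_hseq_fromS m H k s j : j < size s ->
  nth (H1 m) (hseq_from m H k s) j.+1 =
  hins m 0 (nth (H1 m) (hseq_from m H k s) j) (nth 0 s j) (k + j).+1.
Proof.
elim: s H k j => //= i s IH H k [|j] lt_j /=; first by rewrite addn0; case: s {IH lt_j}.
by rewrite IH // addSnnS.
Qed.

Lemma nth_hseqS m s j : j < size s ->
  nth (H1 m) (hseq m s) j.+1 = hins m 0 (nth (H1 m) (hseq m s) j) (nth 0 s j) j.+2.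
Proof. by move=> lt_j; rewrite /hseq nth_hseq_fromS. Qed.

Lemma nth_hseq0 m s : nth (H1 m) (hseq m s) 0 = H1 m.
Proof. by case: s. Qed.

Lemma last_hseq m s : last (H1 m) (hseq m s) = nth (H1 m) (hseq m s) (size s).
Proof. by rewrite -nth_last size_hseq. Qed.

Section History.

Variables (m n : nat) (hist : seq btree) (s : seq nat).
Hypotheses (m_gt0 : 0 < m) (hist_ok : is_history m n hist) (choice : leaf_choice m hist s).

Lemma size_leaf_choice : size s = n.-1.
Proof. by case: hist_ok choice => size_hist _ _ _ [-> _]; rewrite size_hist. Qed.

Lemma history_represents k : k < n -> represents m (nth T1 hist k) (nth (H1 m) (hseq m s) k).
Proof.
case: hist_ok choice => _ hist0 btree_hist _ [_ step].
elim: k => [|k IH] lt_k; first by rewrite hist0 nth_hseq0; apply: represents_T1.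
have lt_ks : k < size s by rewrite size_leaf_choice; lia.
have [lt_leaf ->] := step k lt_ks; have [d ok_k] := btree_hist k (ltnW lt_k).
have [_ _ rep] := represents_binsert k.+2 m_gt0 ok_k lt_leaf (IH (ltnW lt_k)).
by rewrite nth_hseqS.
Qed.

Lemma hseq_historic k : k < n ->
  hwf m 0 (nth (H1 m) (hseq m s) k) /\ perm_eq (hlabels (nth (H1 m) (hseq m s) k)) (iota 1 k.+1).
Proof.
case: choice => _ step; elim: k => [|k IH] lt_k.
  by rewrite nth_hseq0 /= size_nseq eqxx; split; elim: (nslots m 0).
have [wf_k labels_k] := IH (ltnW lt_k).
have lt_ks : k < size s by rewrite size_leaf_choice; lia.
have lt_ext : nth 0 s k < nexternal (nth (H1 m) (hseq m s) k).
  by rewrite -(nleaves_represents (history_represents (ltnW lt_k))); case: (step k lt_ks).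
have lt_lab : all (fun x => x < k.+2) (hlabels (nth (H1 m) (hseq m s) k)).
  by apply/allP => x; rewrite (perm_mem labels_k) mem_iota; lia.
rewrite nth_hseqS //; split; first exact: hins_wf.
apply: perm_trans (@hins_labels m k.+2 _ 0 _ lt_ext) _.
by rewrite -addn1 iotaD cats1 perm_sym perm_rcons add1n addn1 perm_cons perm_sym.
Qed.

Lemma hprune_hseq d k : k + d < n ->
  hprune k.+1 (nth (H1 m) (hseq m s) (k + d)) = nth (H1 m) (hseq m s) k.
Proof.
elim: d k => [|d IH] k lt_kd.
  rewrite addn0 in lt_kd *; apply: hprune_id; apply/allP => x.
  by have [_ labels_k] := hseq_historic lt_kd; rewrite (perm_mem labels_k) mem_iota; lia.
rewrite addnS nth_hseqS; last by rewrite size_leaf_choice; lia.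
by rewrite hprune_hins ?IH //; lia.
Qed.

End History.

Lemma history_btree_seq m n hist s : 0 < n -> is_history m n hist -> leaf_choice m hist s ->
  hist = btree_seq m T1 s.
Proof.
move=> n_gt0 ok c; have size_s := size_leaf_choice ok c.
case: ok c => size_hist hist0 _ _ [_ step].
apply: (@eq_from_nth _ T1); first by rewrite size_btree_seq size_s size_hist; lia.
elim=> [|k IH] lt_k; first by rewrite hist0 nth_btree_seq0.
have lt_ks : k < size s by rewrite size_s; lia.
by rewrite nth_btree_seqS // -IH ?(ltnW lt_k) //; case: (step k lt_ks).
Qed.

Lemma hins_inj m H i j lab : 0 < m -> i < nexternal H -> j < nexternal H ->
  hins m 0 H i lab = hins m 0 H j lab -> i = j.
Proof.
move=> m_gt0 lt_i lt_j /(congr1 (fun t => map (keys_of_height m) (ext_heights 0 t))).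
rewrite /= !hins_ext_heights // !map_keys_of_height_ext_grow ?size_ext_heights //.
by apply: leaf_grow_inj; rewrite // size_map size_ext_heights.
Qed.

Lemma seq_of_choices (P : nat -> nat -> Prop) N : (forall k, k < N -> exists i, P k i) ->
  exists2 s : seq nat, size s = N & forall k, k < N -> P k (nth 0 s k).
Proof.
move=> exP; elim: N exP => [|N IH] exP; first by exists [::].
have [s size_s Ps] := IH (fun k lt_k => exP k (ltnW lt_k)).
have [i Pi] := exP N (ltnSn N).
exists (rcons s i) => [|k]; first by rewrite size_rcons size_s.
rewrite ltnS leq_eqVlt nth_rcons size_s => /orP [/eqP ->|lt_k]; first by rewrite ltnn eqxx.
by rewrite lt_k; apply: Ps.
Qed.

Lemma leaf_choice_exists m n hist : 0 < n -> is_history m n hist -> exists s, leaf_choice m hist s.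
Proof.
move=> n_gt0 [size_hist _ _ step].
have step' k : k < n.-1 -> exists i,
    i < nleaves (nth T1 hist k) /\ nth T1 hist k.+1 = binsert m (nth T1 hist k) i.
  by move=> lt_k; have [i lt_i E] := step k (ltac:(lia)); exists i.
have [s size_s Ps] := seq_of_choices step'.
by exists s; split=> [|k]; rewrite size_s ?size_hist // => /Ps.
Qed.

Lemma leaf_choice_unique m n hist s1 s2 : 0 < m -> is_history m n hist ->
  leaf_choice m hist s1 -> leaf_choice m hist s2 -> s1 = s2.
Proof.
move=> m_gt0 [size_hist _ btree_hist _] [size1 step1] [size2 step2].
apply: (@eq_from_nth _ 0) => [|k lt_k1]; first by rewrite size1 size2.
have lt_k2 : k < size s2 by rewrite size2 -size1.
have [lt_leaf1 E1] := step1 k lt_k1; have [lt_leaf2 E2] := step2 k lt_k2.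
have [d ok_k] := btree_hist k (ltac:(move: lt_k1; rewrite size1 size_hist; lia)).
have [_ _ G1] := binsert_correct m_gt0 ok_k lt_leaf1.
have [_ _ G2] := binsert_correct m_gt0 ok_k lt_leaf2.
apply: (@leaf_grow_inj m (leaf_sizes (nth T1 hist k))); rewrite ?size_leaf_sizes //.
by rewrite -G1 -G2 -E1 -E2.
Qed.

Lemma leaf_choice_final_inj m n hist1 hist2 s1 s2 : 0 < m ->
  is_history m n hist1 -> is_history m n hist2 ->
  leaf_choice m hist1 s1 -> leaf_choice m hist2 s2 ->
  last (H1 m) (hseq m s1) = last (H1 m) (hseq m s2) -> s1 = s2.
Proof.
move=> m_gt0 ok1 ok2 c1 c2.
have size1 := size_leaf_choice ok1 c1; have size2 := size_leaf_choice ok2 c2.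
rewrite !last_hseq size1 size2 => E.
have same_hseq k : k < n -> nth (H1 m) (hseq m s1) k = nth (H1 m) (hseq m s2) k.
  move=> lt_k; have Ek : k + (n.-1 - k) = n.-1 by lia.
  rewrite -(hprune_hseq m_gt0 ok1 c1 (d := n.-1 - k)) ?Ek //; last lia.
  by rewrite -(hprune_hseq m_gt0 ok2 c2 (d := n.-1 - k)) ?Ek ?E //; lia.
apply: (@eq_from_nth _ 0) => [|k lt_k1]; first by rewrite size1 size2.
have lt_kn : k < n by move: lt_k1; rewrite size1; lia.
have ext_bound s hist (ok : is_history m n hist) (c : leaf_choice m hist s) :
    nth 0 s k < nexternal (nth (H1 m) (hseq m s) k).
  rewrite -(nleaves_represents (history_represents m_gt0 ok c lt_kn)).
  by case: (c) => _ step; apply: (step k _).1; rewrite (size_leaf_choice ok c) -size1.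
apply: (@hins_inj m (nth (H1 m) (hseq m s1) k) _ _ k.+2 m_gt0); first exact: ext_bound ok1 c1.
  by rewrite same_hseq //; apply: ext_bound ok2 c2.
have lt_k2 : k < size s2 by rewrite size2 -size1.
have lt_Skn : k.+1 < n by move: lt_k1; rewrite size1; lia.
by rewrite -nth_hseqS // (same_hseq k.+1) // (same_hseq k) // nth_hseqS.
Qed.

Section ChoicesToHistory.

Variables (m : nat) (s : seq nat).
Hypotheses (m_gt0 : 0 < m)
  (lt_ext : forall k, k < size s -> nth 0 s k < nexternal (nth (H1 m) (hseq m s) k)).

Lemma btree_seq_represents k : k <= size s ->
  represents m (nth T1 (btree_seq m T1 s) k) (nth (H1 m) (hseq m s) k) /\
  exists d, bt_ok m (nth T1 (btree_seq m T1 s) k) true d.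
Proof.
elim: k => [|k IH] le_k.
  have ok_T1 : bt_ok m T1 true 0 by rewrite /= andbT; lia.
  by rewrite nth_hseq0 nth_btree_seq0; split; [apply: represents_T1 | exists 0].
have [rep [d ok_k]] := IH (ltnW le_k).
have lt_leaf : nth 0 s k < nleaves (nth T1 (btree_seq m T1 s) k).
  by rewrite (nleaves_represents rep) lt_ext.
have [d' ok' rep'] := represents_binsert k.+2 m_gt0 ok_k lt_leaf rep.
by rewrite nth_btree_seqS // nth_hseqS //; split=> //; exists d'.
Qed.

Lemma btree_seq_leaves k : k < size s -> nth 0 s k < nleaves (nth T1 (btree_seq m T1 s) k).
Proof.
by move=> lt_k; rewrite (nleaves_represents (btree_seq_represents (ltnW lt_k)).1) lt_ext.
Qed.

Lemma btree_seq_history :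
  is_history m (size s).+1 (btree_seq m T1 s) /\ leaf_choice m (btree_seq m T1 s) s.
Proof.
split; last by split=> [|k lt_k]; rewrite ?size_btree_seq ?nth_btree_seqS ?btree_seq_leaves.
split=> [||k lt_k|k lt_k]; rewrite ?size_btree_seq ?nth_btree_seq0 //.
  by have [_ ok] := btree_seq_represents lt_k.
by exists (nth 0 s k); rewrite ?btree_seq_leaves ?nth_btree_seqS.
Qed.

End ChoicesToHistory.

Lemma historic_hseq m n H : 0 < n -> is_historic m n H ->
  exists s, [/\ size s = n.-1,
    forall k, k < size s -> nth 0 s k < nexternal (nth (H1 m) (hseq m s) k) &
    last (H1 m) (hseq m s) = H].
Proof.
move=> n_gt0 [wf_H labels_H].
have uniq_H : uniq (hlabels H) by rewrite (perm_uniq labels_H) iota_uniq.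
have mem_H x : (x \in hlabels H) = (1 <= x < 1 + n) by rewrite (perm_mem labels_H) mem_iota.
have root_H : hlabel H = 1.
  have := allP (hwf_hlabel_min wf_H) 1; rewrite mem_H => /(_ (ltac:(lia))).
  by have := hlabel_in H; rewrite mem_H; lia.
have step k : k < n.-1 -> exists i, i < nexternal (hprune k.+1 H) /\
    hprune k.+2 H = hins m 0 (hprune k.+1 H) i k.+2.
  move=> lt_k; have [||i lt_i E] := @hprune_step m k.+1 H 0 wf_H uniq_H.
  - by rewrite mem_H; lia.
  - by rewrite root_H.
  - by exists i.
have [s size_s Ps] := seq_of_choices step.
have hseq_prune k : k < n -> nth (H1 m) (hseq m s) k = hprune k.+1 H.
  elim: k => [|k IH] lt_k; first by rewrite nth_hseq0 -root_H (hprune_root wf_H) root_H.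
  have lt_kn : k < n.-1 by lia.
  have [_ ->] := Ps k lt_kn.
  by rewrite nth_hseqS ?size_s // IH // ltnW.
exists s; split=> // [k lt_k|].
  by rewrite size_s in lt_k; rewrite hseq_prune; [case: (Ps k lt_k) | lia].
rewrite last_hseq size_s hseq_prune ?prednK //.
by apply: hprune_id; apply/allP => x; rewrite mem_H; lia.
Qed.

Theorem theorem1 (n m : nat) (hn : 1 <= n) (hm : 1 <= m) :
  (forall hist, is_history m n hist -> exists! H, PhiRel m hist H) /\
  (forall hist s, is_history m n hist -> leaf_choice m hist s ->
     forall k, k < n -> nexternal (nth (H1 m) (hseq m s) k) = nleaves (nth T1 hist k)) /\
  (forall hist H, is_history m n hist -> PhiRel m hist H -> is_historic m n H) /\
  (forall hist1 hist2 H, is_history m n hist1 -> is_history m n hist2 ->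
     PhiRel m hist1 H -> PhiRel m hist2 H -> hist1 = hist2) /\
  (forall H, is_historic m n H -> exists2 hist, is_history m n hist & PhiRel m hist H).
Proof.
split.
  move=> hist ok; have [s c] := leaf_choice_exists hn ok.
  exists (last (H1 m) (hseq m s)); split=> [|H' [s' c' ->]]; first by exists s.
  by rewrite (leaf_choice_unique hm ok c c').
split.
  by move=> hist s ok c k lt_k; rewrite (nleaves_represents (history_represents hm ok c lt_k)).
split.
  move=> hist _ ok [s c ->]; rewrite last_hseq (size_leaf_choice ok c).
  by have := hseq_historic hm ok c (ltac:(lia) : n.-1 < n); rewrite prednK.
split.
  move=> hist1 hist2 H ok1 ok2 [s1 c1 E1] [s2 c2 E2].
  rewrite (history_btree_seq hn ok1 c1) (history_btree_seq hn ok2 c2).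
  by rewrite (leaf_choice_final_inj hm ok1 ok2 c1 c2 (etrans (esym E1) E2)).
move=> H /(historic_hseq hn) [s [size_s lt_ext <-]].
have [ok c] := btree_seq_history hm lt_ext.
by exists (btree_seq m T1 s); [rewrite size_s prednK in ok | exists s].
Qed.
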